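(* Let $\alpha:=\frac{\sqrt{e^2+4}-e}{2e}\approx0.2178$. For $x\in[0,1]$, $y\ge0$ with $a:=|x-y|\le\alpha$, we have \[ |x\log x-y\log y|\le -a\log a, \] with the convention $0\log0=0$. *)

From Stdlib Require Import Reals.
Open Scope R_scope.

Definition xlogx (x : R) : R := if Req_EM_T x 0 then 0 else x * ln x.

Definition alpha : R := (sqrt (exp 1 ^ 2 + 4) - exp 1) / (2 * exp 1).

(** Write [{x, y} = {u, u + a}] with [u = min x y <= 1] and [a = |x - y|].  Then
    [(u+a) ln(u+a) - u ln u = a ln(u+a) + u (ln(u+a) - ln u)], and
    [0 <= u (ln(u+a) - ln u) <= a] by [ln t <= t - 1].  Monotonicity of [ln]
    squeezes the difference between [a ln a] and [a ln(1+a) + a]; the latter is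
    at most [-a ln a] as soon as [a (1+a) <= e^-1], which holds on [[0, alpha]]
    because [alpha (1+alpha) = e^-2]. *)

From Stdlib Require Import Reals Lra Psatz.
Open Scope R_scope.

Lemma xlogxE (x : R) : xlogx x = x * ln x.
Proof. unfold xlogx; destruct (Req_EM_T x 0) as [->|_]; ring. Qed.

Lemma ln_le (x y : R) : 0 < x -> x <= y -> ln x <= ln y.
Proof.
  intros Hx [Hxy | <-]; [left; apply ln_increasing |]; lra.
Qed.

Lemma ln_le_sub_1 (x : R) : 0 < x -> ln x <= x - 1.
Proof.
  intros Hx. pose proof (exp_ineq1_le (ln x)) as H.
  rewrite exp_ln in H by exact Hx. lra.
Qed.

Lemma mul_ln_increment_le (u a : R) :
  0 < u -> 0 <= a -> u * (ln (u + a) - ln u) <= a.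
Proof.
  intros Hu Ha.
  assert (Eq : ln (u + a) - ln u = ln ((u + a) / u)).
  { unfold Rdiv. rewrite ln_mult, ln_Rinv by (try apply Rinv_0_lt_compat; lra).
    ring. }
  assert (Hq : 0 < (u + a) / u) by (apply Rdiv_lt_0_compat; lra).
  pose proof (ln_le_sub_1 _ Hq) as H.
  rewrite Eq. apply Rmult_le_compat_l with (r := u) in H; [| lra].
  replace (u * ((u + a) / u - 1)) with a in H by (field; lra). exact H.
Qed.

Lemma xlogx_add_ge (u a : R) :
  0 <= u -> 0 < a -> a * ln a <= xlogx (u + a) - xlogx u.
Proof.
  intros Hu Ha. rewrite !xlogxE.
  assert (Hln : ln a <= ln (u + a)) by (apply ln_le; lra).
  destruct (Req_dec u 0) as [-> | Hu0].
  - rewrite Rplus_0_l. lra.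
  - assert (Hinc : ln u <= ln (u + a)) by (apply ln_le; lra).
    nra.
Qed.

Lemma xlogx_add_le (u a : R) :
  0 <= u -> 0 < a -> xlogx (u + a) - xlogx u <= a * ln (u + a) + a.
Proof.
  intros Hu Ha. rewrite !xlogxE.
  destruct (Req_dec u 0) as [-> | Hu0].
  - rewrite Rplus_0_l. lra.
  - pose proof (mul_ln_increment_le u a ltac:(lra) ltac:(lra)). nra.
Qed.

Lemma alpha_mul_succ : alpha * (1 + alpha) = exp (-2).
Proof.
  assert (He : 0 < exp 1) by apply exp_pos.
  assert (Hsq := sqrt_sqrt (exp 1 ^ 2 + 4) ltac:(nra)).
  replace (-2) with (- (1 + 1)) by ring.
  rewrite exp_Ropp, exp_plus.
  unfold alpha. set (s := sqrt (exp 1 ^ 2 + 4)) in *.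
  replace ((s - exp 1) / (2 * exp 1) * (1 + (s - exp 1) / (2 * exp 1)))
    with ((s * s - exp 1 * exp 1) / (4 * exp 1 * exp 1)) by (field; lra).
  rewrite Hsq. field. lra.
Qed.

Lemma ln_mul_succ_le (a : R) : 0 < a -> a <= alpha -> ln a + ln (1 + a) <= -2.
Proof.
  intros Ha Hal. rewrite <- ln_mult by lra. rewrite <- (ln_exp (-2)).
  apply ln_le; [nra |]. rewrite <- alpha_mul_succ. nra.
Qed.

Lemma xlogx_add_abs_le (u a : R) :
  0 <= u <= 1 -> 0 <= a <= alpha -> Rabs (xlogx (u + a) - xlogx u) <= - xlogx a.
Proof.
  intros Hu Ha. destruct (Req_dec a 0) as [-> | Ha0].
  - rewrite Rplus_0_r, Rminus_diag, Rabs_R0, xlogxE, Rmult_0_l, Ropp_0.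
    apply Rle_refl.
  - assert (Hap : 0 < a) by lra.
    pose proof (xlogx_add_ge u a ltac:(lra) Hap).
    pose proof (xlogx_add_le u a ltac:(lra) Hap).
    pose proof (ln_mul_succ_le a Hap ltac:(lra)).
    assert (ln (u + a) <= ln (1 + a)) by (apply ln_le; lra).
    rewrite (xlogxE a). apply Rabs_le. split; nra.
Qed.

Theorem lemma5 (x y : R) (hx0 : 0 <= x) (hx1 : x <= 1) (hy : 0 <= y)
  (ha : Rabs (x - y) <= alpha) :
  Rabs (xlogx x - xlogx y) <= - xlogx (Rabs (x - y)).
Proof.
  destruct (Rle_lt_dec x y) as [Hxy | Hyx].
  - assert (Ea : Rabs (x - y) = y - x) by (rewrite Rabs_left1; lra).
    rewrite Ea in *. rewrite Rabs_minus_sym.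
    replace y with (x + (y - x)) at 1 by ring.
    apply xlogx_add_abs_le; lra.
  - assert (Ea : Rabs (x - y) = x - y) by (rewrite Rabs_right; lra).
    rewrite Ea in *.
    replace x with (y + (x - y)) at 1 by ring.
    apply xlogx_add_abs_le; lra.
Qed.
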